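(* Let $\mathfrak{g}_1,\mathfrak{g}_2$ be real solvable Lie algebras with $m_i=b_1(\mathfrak{g}_i)$. If $\mathcal{N}(\mathfrak{g}_1)=\mathcal{N}(\mathfrak{g}_2)=0$, then $\mathcal{N}(\mathfrak{g}_1\underline{\times}\mathfrak{g}_2)=m_1m_2$.
   Context: All Lie algebras are finite-dimensional over $\mathbb{R}$; $b_1(\mathfrak{g})=\dim\mathfrak{g}/[\mathfrak{g},\mathfrak{g}]$. $\mathcal{N}(\mathfrak{g})$ denotes the number of functionally independent invariants of the coadjoint representation: $\mathcal{N}(\mathfrak{g})=\dim\mathfrak{g}-\max_x\operatorname{rank}\big(\sum_k C_{ij}^kx_k\big)_{i,j}$, where $C_{ij}^k$ are the structure constants in a basis. Product by generators: choose linear forms $\omega_1,\dots,\omega_{m_1}$ on $\mathfrak{g}_1$ vanishing on $[\mathfrak{g}_1,\mathfrak{g}_1]$ and inducing a basis of $(\mathfrak{g}_1/[\mathfrak{g}_1,\mathfrak{g}_1])^*$, similarly $\omega'_1,\dots,\omega'_{m_2}$ for $\mathfrak{g}_2$; $\mathfrak{g}_1\underline{\times}\mathfrak{g}_2$ is the Lie algebra on $\mathfrak{g}_1\oplus\mathfrak{g}_2\oplus\mathbb{R}^{m_1m_2}$ (basis $Z_{ij}$ of the last summand) whose bracket restricts to the given brackets on $\mathfrak{g}_1$ and $\mathfrak{g}_2$, with $Z_{ij}$ central and $[x,y]=\sum_{i,j}\omega_i(x)\omega'_j(y)Z_{ij}$ for $x\in\mathfrak{g}_1$, $y\in\mathfrak{g}_2$.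 *)

From HB Require Import structures.
From mathcomp Require Import all_boot all_order all_algebra.
From mathcomp Require Import boolp reals.
Set Implicit Arguments. Unset Strict Implicit. Unset Printing Implicit Defensive.
Import Order.TTheory GRing.Theory Num.Theory.
Local Open Scope ring_scope.

(* A real Lie algebra of dimension n is given, in the basis e_0..e_(n-1),
   by its structure constants c i j k = C_{ij}^k, i.e. [e_i,e_j] = sum_k c i j k e_k.
   Elements are row vectors 'rV[R]_n. *)
Section Lie.
Variable R : realType.
Variable n : nat.
Variable c : 'I_n -> 'I_n -> 'I_n -> R.

Definition lie_br (x y : 'rV[R]_n) : 'rV[R]_n :=
  \row_k \sum_(i < n) \sum_(j < n) x 0 i * y 0 j * c i j k.

Definition is_lie : Prop :=
  (forall i j k, c i j k = - c j i k) /\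
  (forall x y z : 'rV[R]_n,
     lie_br x (lie_br y z) + lie_br y (lie_br z x) + lie_br z (lie_br x y) = 0).

(* [U,V] for subspaces U,V (represented by matrices whose rows span them). *)
Definition br_space (U V : 'M[R]_n) : 'M[R]_n :=
  (\sum_(i < n) \sum_(j < n) <<lie_br (row i U) (row j V)>>)%MS.

Definition derived_alg : 'M[R]_n := br_space 1%:M 1%:M.

Definition derived_series (k : nat) : 'M[R]_n :=
  iter k (fun U => br_space U U) 1%:M.

Definition lie_solvable : Prop := exists k, derived_series k = 0.

Definition b1 : nat := (n - \rank derived_alg)%N.

Definition coadj_mx (x : 'rV[R]_n) : 'M[R]_n :=
  \matrix_(i, j) \sum_(k < n) c i j k * x 0 k.

Definition max_coadj_rank : nat :=
  \max_(r < n.+1 | `[< exists x : 'rV[R]_n, \rank (coadj_mx x) = r >]) r.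

Definition N_inv : nat := (n - max_coadj_rank)%N.

(* W : 'M_(n,m), whose j-th column is the linear form omega_j (omega_j(x) = (x *m W) 0 j),
   is an admissible choice of forms: they vanish on [g,g] and induce a basis of
   (g/[g,g])^* (i.e. they are linearly independent, m = b1 being given separately). *)
Definition gen_forms (m : nat) (W : 'M[R]_(n, m)) : Prop :=
  (derived_alg *m W = 0) /\ \rank W = m.
End Lie.

(* Product by generators g1 x_ g2 on R^(n1) + R^(n2) + R^(m1*m2);
   the basis vector Z_ij of the last summand is delta at mxvec_index i j. *)
Section GProd.
Variable R : realType.
Variables n1 n2 m1 m2 : nat.
Variable c1 : 'I_n1 -> 'I_n1 -> 'I_n1 -> R.
Variable c2 : 'I_n2 -> 'I_n2 -> 'I_n2 -> R.
Variable W1 : 'M[R]_(n1, m1).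
Variable W2 : 'M[R]_(n2, m2).

Definition gprod_br (x y : 'rV[R]_(n1 + n2 + m1 * m2)) : 'rV[R]_(n1 + n2 + m1 * m2) :=
  let x1 := lsubmx (lsubmx x) in let x2 := rsubmx (lsubmx x) in
  let y1 := lsubmx (lsubmx y) in let y2 := rsubmx (lsubmx y) in
  row_mx (row_mx (lie_br c1 x1 y1) (lie_br c2 x2 y2))
         (mxvec (((x1 *m W1)^T *m (y2 *m W2)) - ((y1 *m W1)^T *m (x2 *m W2)))).

Definition gprod_const (i j k : 'I_(n1 + n2 + m1 * m2)) : R :=
  gprod_br (delta_mx 0 i) (delta_mx 0 j) 0 k.
End GProd.

(** The coordinates [Z_ij] span a central ideal of the product by generators,
    so the rows of its coadjoint matrix indexed by them vanish and its rank is
    at most [n1 + n2].  On covectors vanishing on the [Z_ij] the coadjoint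
    matrix is the block diagonal sum of those of [g1] and [g2], which both
    reach full rank because [N(g1) = N(g2) = 0].  Hence the maximal rank is
    [n1 + n2] and [N] is the number [m1 m2] of the [Z_ij]. *)

From HB Require Import structures.
From mathcomp Require Import all_boot all_order all_algebra.
From mathcomp Require Import boolp reals.
Set Implicit Arguments. Unset Strict Implicit. Unset Printing Implicit Defensive.
Import Order.TTheory GRing.Theory Num.Theory.
Local Open Scope ring_scope.

Lemma mx_entry_form (R : pzRingType) m n (A : 'M[R]_(m, n)) i j :
  A i j = (delta_mx (0 : 'I_1) i *m A *m (delta_mx (0 : 'I_1) j)^T) 0 0.
Proof. by rewrite trmx_delta -rowE -colE !mxE. Qed.

Section Bracket.
Variables (R : realType) (n : nat) (c : 'I_n -> 'I_n -> 'I_n -> R).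

Lemma lie_br0l y : lie_br c 0 y = 0.
Proof.
apply/rowP => k; rewrite !mxE; apply: big1 => i _; apply: big1 => j _.
by rewrite mxE !mul0r.
Qed.

Lemma lie_br_coadj_form u v x : lie_br c u v *m x^T = u *m coadj_mx c x *m v^T.
Proof.
apply/matrixP => a b; rewrite !ord1 !mxE.
under eq_bigr => k _ do rewrite !mxE big_distrl /=.
under [RHS]eq_bigr => j _ do rewrite !mxE big_distrl /=.
rewrite exchange_big [RHS]exchange_big; apply: eq_bigr => i _ /=.
under eq_bigr => k _ do rewrite big_distrl /=.
rewrite exchange_big; apply: eq_bigr => j _ /=.
rewrite mxE big_distrr big_distrl; apply: eq_bigr => k _ /=.
by rewrite [RHS]mulrAC -!mulrA.
Qed.
End Bracket.

Lemma coadj_mx_of_br (R : realType) n (br : 'rV[R]_n -> 'rV[R]_n -> 'rV[R]_n) x i j :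
  coadj_mx (fun i j k => br (delta_mx 0 i) (delta_mx 0 j) 0 k) x i j
  = (br (delta_mx 0 i) (delta_mx 0 j) *m x^T) 0 0.
Proof. by rewrite !mxE; apply: eq_bigr => k _; rewrite mxE. Qed.

Lemma diag_block0_form (R : pzRingType) p q r (A : 'M[R]_p) (B : 'M_q)
    (u v : 'rV[R]_(p + q + r)) :
  u *m block_mx (block_mx A 0 0 B) 0 0 (0 : 'M_r) *m v^T
  = lsubmx (lsubmx u) *m A *m (lsubmx (lsubmx v))^T
    + rsubmx (lsubmx u) *m B *m (rsubmx (lsubmx v))^T.
Proof.
rewrite -{1}(hsubmxK u) -{1}(hsubmxK (lsubmx u)) -{1}(hsubmxK v) -{1}(hsubmxK (lsubmx v)).
rewrite !mul_row_block !mulmx0 !addr0 !add0r.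
by rewrite !tr_row_mx !mul_row_col mul0mx addr0.
Qed.

Section CoadjointRank.
Variables (R : realType) (n : nat) (c : 'I_n -> 'I_n -> 'I_n -> R).

Lemma coadj_mx0 : coadj_mx c 0 = 0.
Proof. by apply/matrixP => i j; rewrite !mxE big1 // => k _; rewrite mxE mulr0. Qed.

Lemma rank_coadj_le_max x : (\rank (coadj_mx c x) <= max_coadj_rank c)%N.
Proof.
have rank_lt : (\rank (coadj_mx c x) < n.+1)%N by rewrite ltnS rank_leq_row.
by apply: (leq_bigmax_cond (Ordinal rank_lt)); apply/asboolP; exists x.
Qed.

Lemma max_coadj_rank_attained : exists x, \rank (coadj_mx c x) = max_coadj_rank c.
Proof.
have P0 : `[< exists x : 'rV[R]_n, \rank (coadj_mx c x) = @ord0 n >].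
  by apply/asboolP; exists 0; rewrite coadj_mx0 mxrank0.
rewrite /max_coadj_rank (bigop.bigmax_eq_arg ord0 P0).
by case: arg_maxnP => // i /asboolP[x rank_x] _; exists x.
Qed.

Lemma max_coadj_rankE r :
    (forall x, \rank (coadj_mx c x) <= r)%N ->
    (exists x, \rank (coadj_mx c x) = r) ->
  max_coadj_rank c = r.
Proof.
move=> rank_le [x rank_x]; apply/eqP; rewrite eqn_leq -{2}rank_x rank_coadj_le_max.
by have [y <-] := max_coadj_rank_attained; rewrite rank_le.
Qed.

Lemma N_inv_eq0_full_rank : N_inv c = 0%N -> exists x, \rank (coadj_mx c x) = n.
Proof.
move/eqP; rewrite subn_eq0 => n_le_max.
have [x rank_x] := max_coadj_rank_attained; exists x.
by apply/eqP; rewrite eqn_leq rank_leq_row rank_x.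
Qed.

End CoadjointRank.

Section ProductByGenerators.
Variables (R : realType) (n1 n2 m1 m2 : nat).
Variables (c1 : 'I_n1 -> 'I_n1 -> 'I_n1 -> R) (c2 : 'I_n2 -> 'I_n2 -> 'I_n2 -> R).
Variables (W1 : 'M[R]_(n1, m1)) (W2 : 'M[R]_(n2, m2)).
Local Notation br := (gprod_br c1 c2 W1 W2).
Local Notation c := (gprod_const c1 c2 W1 W2).

Lemma gprod_br_centerl z v : br (row_mx 0 z) v = 0.
Proof.
rewrite /gprod_br row_mxKl !raddf0 !lie_br0l !mul0mx trmx0 mul0mx mulmx0 subr0.
by rewrite linear0 !row_mx0.
Qed.

Lemma gprod_br_pairing u v (x1 : 'rV[R]_n1) (x2 : 'rV[R]_n2) :
  br u v *m (row_mx (row_mx x1 x2) 0)^T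
  = lie_br c1 (lsubmx (lsubmx u)) (lsubmx (lsubmx v)) *m x1^T
    + lie_br c2 (rsubmx (lsubmx u)) (rsubmx (lsubmx v)) *m x2^T.
Proof. by rewrite /gprod_br !tr_row_mx !mul_row_col trmx0 mulmx0 addr0. Qed.

Lemma coadj_gprod_block (x1 : 'rV[R]_n1) (x2 : 'rV[R]_n2) :
  coadj_mx c (row_mx (row_mx x1 x2) 0)
  = block_mx (block_mx (coadj_mx c1 x1) 0 0 (coadj_mx c2 x2)) 0 0 0.
Proof.
apply/matrixP => i j.
rewrite coadj_mx_of_br gprod_br_pairing !lie_br_coadj_form.
by rewrite [RHS]mx_entry_form diag_block0_form.
Qed.

Lemma rank_coadj_gprod_le x : (\rank (coadj_mx c x) <= n1 + n2)%N.
Proof.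
have center_rows0 : dsubmx (coadj_mx c x) = 0.
  apply/matrixP => z j.
  by rewrite mxE coadj_mx_of_br delta_mx_rshift gprod_br_centerl mul0mx !mxE.
by rewrite -[coadj_mx c x]vsubmxK center_rows0 rank_col_mx0 rank_leq_row.
Qed.

End ProductByGenerators.

Theorem corollary1 (R : realType) (n1 n2 m1 m2 : nat)
  (c1 : 'I_n1 -> 'I_n1 -> 'I_n1 -> R) (c2 : 'I_n2 -> 'I_n2 -> 'I_n2 -> R)
  (W1 : 'M[R]_(n1, m1)) (W2 : 'M[R]_(n2, m2)) :
  is_lie c1 -> is_lie c2 -> lie_solvable c1 -> lie_solvable c2 ->
  m1 = b1 c1 -> m2 = b1 c2 -> gen_forms c1 W1 -> gen_forms c2 W2 ->
  N_inv c1 = 0%N -> N_inv c2 = 0%N ->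
  N_inv (gprod_const c1 c2 W1 W2) = (m1 * m2)%N.
Proof.
move=> _ _ _ _ _ _ _ _ /N_inv_eq0_full_rank[x1 rank_x1] /N_inv_eq0_full_rank[x2 rank_x2].
rewrite /N_inv (@max_coadj_rankE _ _ _ (n1 + n2)) ?addKn //.
  exact: rank_coadj_gprod_le.
exists (row_mx (row_mx x1 x2) 0).
by rewrite coadj_gprod_block !rank_diag_block_mx mxrank0 rank_x1 rank_x2 addn0.
Qed.
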